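(* Let $G$ be a planar graph which is not homeomorphic to $S^{1}$ and which admits a checkerboard coloring on $S^{2}$ with respect to a cellular embedding $p:G\to S^{2}$. Define $\omega_p:\Gamma(G)\to\mathbb{Z}$ by $\omega_p(\gamma)=1$ if $\gamma\in\Gamma_p^b(G)$, $\omega_p(\gamma)=-1$ if $\gamma\in\Gamma_p^w(G)$, and $\omega_p(\gamma)=0$ if $\gamma\in\Gamma(G)\setminus\Gamma_p(G)$. Then $\omega_p$ is weakly balanced on every edge $e$ of $G$, i.e. $\sum_{\gamma\in\Gamma_e(G)}\omega_p(\gamma)=0$ in $\mathbb{Z}$.
   Context: Graphs are finite, without isolated vertices and without vertices of degree one. A cycle is a subgraph homeomorphic to $S^1$; $\Gamma(G)$ is the set of all cycles of $G$, and $\Gamma_e(G)$ those containing the edge $e$. An embedding $p:G\to S^2$ is cellular if the closure of each connected component of $S^2-p(G)$ is a disk; then $\Gamma_p(G)\subset\Gamma(G)$ denotes the set of cycles that are the boundaries of the components of $S^2-p(G)$. $G$ admits a checkerboard coloring with respect to a cellular embedding $p$ if the components of $S^2-p(G)$ can be colored black and white so that any two components adjacent along an edge have different colors; $\Gamma_p^b(G)$ (resp. $\Gamma_p^w(G)$) is the set of boundaries of black (resp. white) components. *)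

(* Combinatorial (rotation-system) model of cellular
   embeddings of finite graphs in S^2. *)
From mathcomp Require Import all_boot all_order all_algebra all_fingroup.
Set Implicit Arguments. Unset Strict Implicit. Unset Printing Implicit Defensive.
Import GRing.Theory.
Local Open Scope ring_scope.

Section GraphDefs.
(* A finite multigraph (loops and multiple edges allowed): vertex type V,
   edge type E; each edge e has two darts (half-edges) (e,true), (e,false);
   head d is the vertex at which the dart d ends. *)
Variables (V E : finType) (head : E * bool -> V).

Definition dart := (E * bool)%type.
Definition dart_of : finType := (E * bool)%type.
Definition rev (d : dart) : dart := (d.1, ~~ d.2).

Definition inc (C : {set E}) (v : V) : bool :=
  [exists d : dart, (d.1 \in C) && (head d == v)].
Definition degC (C : {set E}) (v : V) : nat :=
  #|[set d : dart | (d.1 \in C) && (head d == v)]|.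
Definition adjC (C : {set E}) : rel V := fun u w =>
  [exists d : dart, [&& d.1 \in C, head (rev d) == u & head d == w]].

(* a cycle = a subgraph homeomorphic to S^1 = nonempty, connected, 2-regular *)
Definition is_cycle (C : {set E}) : bool :=
  [&& C != set0,
      [forall v, inc C v ==> (degC C v == 2)%N] &
      [forall u, forall w, (inc C u && inc C w) ==> connect (adjC C) u w]].

Definition Cycles : {set {set E}} := [set C : {set E} | is_cycle C].

Definition min_deg2 : Prop := forall v : V, (1 < degC setT v)%N.

Definition connected_graph : Prop := forall u w : V, connect (adjC setT) u w.

Definition rotation_system (sigma : {perm dart_of}) : Prop :=
  (forall d, head (sigma d) = head d) /\
  (forall d d', head d = head d' -> fconnect sigma d d').

Definition face_perm (sigma : {perm dart_of}) (d : dart) : dart := sigma (rev d).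
Definition face (sigma : {perm dart_of}) (d : dart) : {set dart} :=
  [set d' | fconnect (face_perm sigma) d d'].
Definition faces (sigma : {perm dart_of}) : {set {set dart}} :=
  [set face sigma d | d : dart].

(* the rotation system describes a cellular embedding in S^2
   (connected, Euler characteristic 2) *)
Definition spherical (sigma : {perm dart_of}) : Prop :=
  [/\ rotation_system sigma, connected_graph &
      (#|V| + #|faces sigma| = #|E| + 2)%N].

(* closure of each face is a disk: the facial walk is a simple closed curve *)
Definition faces_are_disks (sigma : {perm dart_of}) : Prop :=
  forall d, {in face sigma d &, injective head}.

Definition cellular_S2 (sigma : {perm dart_of}) : Prop :=
  spherical sigma /\ faces_are_disks sigma.

(* checkerboard colouring of the faces (true = black, false = white) *)
Definition checkerboard (sigma : {perm dart_of}) (col : dart -> bool) : Prop :=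
  forall d, col (face_perm sigma d) = col d /\ col (rev d) = ~~ col d.

Definition boundary (sigma : {perm dart_of}) (d : dart) : {set E} :=
  [set d'.1 | d' in face sigma d].

Definition black_cycles (sigma : {perm dart_of}) (col : dart -> bool) : {set {set E}} :=
  [set C in Cycles | [exists d : dart, col d && (boundary sigma d == C)]].
Definition white_cycles (sigma : {perm dart_of}) (col : dart -> bool) : {set {set E}} :=
  [set C in Cycles | [exists d : dart, ~~ col d && (boundary sigma d == C)]].

Definition omega (sigma : {perm dart_of}) (col : dart -> bool) (C : {set E}) : int :=
  if C \in black_cycles sigma col then 1
  else if C \in white_cycles sigma col then -1 else 0.

End GraphDefs.

From Pilot Require Import Defs.
From mathcomp Require Import all_boot all_order all_algebra all_fingroup.
Set Implicit Arguments. Unset Strict Implicit. Unset Printing Implicit Defensive.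
Import GRing.Theory.

(* Since every face is a disk, its facial walk is simple and its boundary is a
   cycle of G. The edge e lies exactly on the boundaries of the faces of its two
   darts, which the checkerboard colouring paints with opposite colours. Unless
   G is itself a cycle, distinct faces have distinct boundaries: if the faces of
   a dart d and of its reverse had the same boundary, their union would be
   closed under reversal and rotation of darts, hence contain every dart, and
   that boundary would be all of G. So among the cycles through e one has
   weight 1, one has weight -1, and all others have weight 0. *)

Local Notation rev := (@Defs.rev _).

Section Faces.
Variables (E : finType) (sigma : {perm dart_of E}).
Local Notation f := (face_perm sigma).
Local Notation face := (face sigma).
Local Notation boundary := (boundary sigma).

Lemma revK : involutive (@Defs.rev E).
Proof. by case=> g b; rewrite /Defs.rev /= negbK. Qed.

Lemma face_perm_inj : injective f.
Proof. by move=> x y /perm_inj /(inv_inj revK). Qed.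

Lemma mem_face x : x \in face x.
Proof. by rewrite inE. Qed.

Lemma face_perm_face x y : y \in face x -> f y \in face x.
Proof. by rewrite !inE => /connect_trans; apply; apply: fconnect1. Qed.

Lemma face_eq x y : y \in face x -> face y = face x.
Proof.
rewrite inE => xy; apply/setP => z; rewrite !inE.
by rewrite (same_connect (fconnect_sym face_perm_inj) xy).
Qed.

Lemma mem_boundary d x :
  (x.1 \in boundary d) = (x \in face d) || (rev x \in face d).
Proof.
apply/imsetP/orP => [[y yd]|[xd|rxd]]; [|by exists x|by exists (rev x)].
by case: x y yd => g b [g' b'] yd /= ->; case: b b' yd => -[]; auto.
Qed.

Lemma boundary_face_eq x y : y \in face x -> boundary y = boundary x.
Proof. by move=> xy; rewrite /Defs.boundary (face_eq xy). Qed.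

Lemma boundary_edge_cases d x :
  d.1 \in boundary x -> boundary x = boundary d \/ boundary x = boundary (rev d).
Proof.
by rewrite mem_boundary => /orP[] /boundary_face_eq ->; [left|right].
Qed.

Lemma checkerboard_face col x y :
  checkerboard sigma col -> y \in face x -> col y = col x.
Proof.
move=> chk; rewrite inE => /(fconnect_invariant _) xy; apply/esym/xy => z.
by rewrite !inE (chk z).1 eqxx.
Qed.

End Faces.

Section Embedding.
Variables (V E : finType) (head : E * bool -> V) (sigma : {perm dart_of E}).
Variable col : dart E -> bool.
Local Notation f := (face_perm sigma).
Local Notation face := (face sigma).
Local Notation boundary := (boundary sigma).
Local Notation omega := (omega head sigma col).

Lemma adjC_sym C : symmetric (adjC head C).
Proof.
move=> u w; apply/existsP/existsP => -[z /and3P[zC uz wz]];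
  by exists (rev z); rewrite revK uz wz zC.
Qed.

Lemma omega_eq0 C : (forall d, boundary d != C) -> omega C = 0%R.
Proof.
move=> notbd; rewrite /Defs.omega !inE.
have nex (c : bool -> bool) : [exists x, c (col x) && (boundary x == C)] = false.
  by apply/existsP => -[x]; rewrite (negbTE (notbd x)) andbF.
by rewrite (nex id) (nex negb) !andbF.
Qed.

Hypothesis rot : rotation_system head sigma.

Lemma head_face_perm d : head (f d) = head (rev d).
Proof. exact: rot.1. Qed.

Hypothesis conn : connected_graph head.

Lemma closed_darts_setT (D : {set dart_of E}) d :
  d \in D -> {homo rev : x / x \in D} -> {homo sigma : x / x \in D} ->
  D = [set: dart_of E].
Proof.
move=> dD Drev Dsigma.
have clD : fclosed sigma D.
  apply: (intro_closed (fconnect_sym (@perm_inj _ sigma))) => x _ /eqP <-; exact: Dsigma.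
pose W := [pred w | [exists x in D, head x == w]].
have clW : closed (adjC head setT) W.
  apply: (intro_closed (sym_connect_sym (adjC_sym _))) => u w.
  case/existsP => z /and3P[_ /eqP zu /eqP <-] /existsP[x /andP[xD /eqP xu]].
  apply/existsP; exists z; rewrite eqxx andbT -[z]revK; apply: Drev.
  by rewrite -(closed_connect clD (rot.2 _ _ (etrans xu (esym zu)))).
apply/setP => y; rewrite inE.
have /existsP[x /andP[xD /eqP xy]] : head y \in W.
  by rewrite -(closed_connect clW (conn (head d) _)); apply/existsP; exists d; rewrite dD eqxx.
by rewrite -(closed_connect clD (rot.2 _ _ xy)).
Qed.

Hypotheses (deg2 : min_deg2 head) (disk : faces_are_disks head sigma).

Lemma rotation_no_fixpoint d : sigma d != d.
Proof.
move: (deg2 (head d)); rewrite /degC (cardsD1 d) !inE eqxx ltnS card_gt0.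
case/set0Pn => y; rewrite !inE => /andP[yd /eqP hy].
apply: contra yd => /eqP fixd; apply/eqP.
move/iter_findex: (rot.2 _ _ (esym hy)) => <-.
by elim: findex => //= n ->.
Qed.

Lemma rev_notin_face x : rev x \notin face x.
Proof.
apply/negP => rx; have /eqP[] := rotation_no_fixpoint (rev x).
exact: (disk (face_perm_face (mem_face _ x)) rx (head_face_perm x)).
Qed.

Lemma inc_boundary d v :
  inc head (boundary d) v -> exists2 y, y \in face d & head y = v.
Proof.
case/existsP => x /andP[]; rewrite mem_boundary => /orP[xd|rxd] /eqP <-.
  by exists x.
by exists (f (rev x)); rewrite ?face_perm_face // head_face_perm revK.
Qed.

(* The face of d passes through the vertex head y only once, arriving along y
   and leaving along the reverse of the predecessor of y. *)
Lemma darts_at_boundary_vertex d y : y \in face d ->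
  [set x | (x.1 \in boundary d) && (head x == head y)] = [set y; rev (finv f y)].
Proof.
move=> yd; have fK := f_finv (@face_perm_inj _ sigma).
have pd : finv f y \in face d by rewrite -(face_eq yd) inE fconnect_finv.
apply/setP => x; rewrite !inE mem_boundary; apply/idP/idP.
  case/andP => /orP[xd|rxd] /eqP hx; first by rewrite (disk xd yd hx) eqxx.
  have : f (rev x) = f (finv f y).
    by rewrite fK; apply: (disk (face_perm_face rxd) yd); rewrite head_face_perm revK.
  by move/face_perm_inj <-; rewrite revK eqxx orbT.
by case/orP => /eqP ->; rewrite ?yd ?eqxx // revK pd orbT -head_face_perm fK eqxx.
Qed.

Lemma degC_boundary d v : inc head (boundary d) v -> degC head (boundary d) v = 2.
Proof.
case/inc_boundary => y yd <-; rewrite /degC darts_at_boundary_vertex // cards2.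
by rewrite -{1}(f_finv (@face_perm_inj _ sigma) y) rotation_no_fixpoint.
Qed.

Lemma connect_boundary d y :
  y \in face d -> connect (adjC head (boundary d)) (head d) (head y).
Proof.
rewrite inE => /iter_findex <-; elim: findex => //= n IH.
apply: connect_trans IH (connect1 _); apply/existsP; exists (rev (iter n f d)).
by rewrite revK head_face_perm !eqxx mem_boundary revK !inE fconnect_iter orbT.
Qed.

Lemma boundary_cycle d : is_cycle head (boundary d).
Proof.
apply/and3P; split.
- by apply/set0Pn; exists d.1; rewrite mem_boundary mem_face.
- by apply/forallP => v; apply/implyP => /degC_boundary ->.
apply/forallP => u; apply/forallP => w; apply/implyP.
case/andP => /inc_boundary[y yd <-] /inc_boundary[z zd <-].
rewrite -(same_connect (sym_connect_sym (adjC_sym _)) (connect_boundary yd)).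
exact: connect_boundary.
Qed.

Hypothesis noncycle : ~ is_cycle head [set: E].

Lemma boundary_rev_neq d : boundary d != boundary (rev d).
Proof.
apply/eqP => bd_rev; apply: noncycle.
have disjoint_faces x : x \in face d -> x \in face (rev d) -> False.
  move=> xd xrd; have := rev_notin_face d.
  by rewrite -(face_eq xd) (face_eq xrd) mem_face.
pose D := face d :|: face (rev d).
have Drev : {homo rev : x / x \in D}.
  move=> x; rewrite !in_setU; have := mem_boundary sigma d x.
  rewrite {1}bd_rev mem_boundary.
  case: (boolP (x \in face d)) => xd; case: (boolP (x \in face (rev d))) => xrd //=.
  - by have := disjoint_faces _ xd xrd.
  - by move=> -> _; rewrite orbT.
  by move=> <-.
have Dsigma : {homo sigma : x / x \in D}.
  move=> x /Drev; rewrite !in_setU -[x in sigma x]revK.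
  by case/orP => /face_perm_face ->; rewrite ?orbT.
have dD : d \in D by rewrite in_setU mem_face.
have Dfull := closed_darts_setT dD Drev Dsigma.
suff <- : boundary d = [set: E] by apply: boundary_cycle.
apply/setP => g; rewrite inE -[g]/((g, true).1).
have : (g, true) \in D by rewrite Dfull inE.
by rewrite inE => /orP[] gd; [|rewrite bd_rev]; rewrite mem_boundary gd.
Qed.

Lemma boundary_eq_face x y : boundary x = boundary y -> y \in face x.
Proof.
move=> bxy; have : y.1 \in boundary x by rewrite bxy mem_boundary mem_face.
rewrite mem_boundary => /orP[//|/boundary_face_eq bryx].
by have /eqP[] := boundary_rev_neq y; rewrite bryx.
Qed.

Hypothesis chk : checkerboard sigma col.

Lemma checkerboard_boundary x y : boundary x = boundary y -> col x = col y.
Proof. by move/boundary_eq_face/(checkerboard_face chk). Qed.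

Lemma omega_boundary d : omega (boundary d) = (if col d then 1 else -1)%R.
Proof.
have coloured (c : bool -> bool) :
    [exists x, c (col x) && (boundary x == boundary d)] = c (col d).
  apply/existsP/idP => [[x /andP[cx /eqP /checkerboard_boundary <-]] //|cd].
  by exists d; rewrite cd eqxx.
by rewrite /Defs.omega !inE boundary_cycle (coloured id) (coloured negb); case: (col d).
Qed.

End Embedding.

Theorem proposition4p1 (V E : finType) (head : E * bool -> V)
    (sigma : {perm dart_of E}) (col : dart E -> bool) :
  min_deg2 head ->
  cellular_S2 head sigma ->
  ~ is_cycle head [set: E] ->
  checkerboard sigma col ->
  forall e : E,
    (\sum_(C in Cycles head | e \in C) omega head sigma col C)%R = 0%R.
Proof.
move=> deg2 [[rot conn _] disk] noncycle chk e; set d := (e, true).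
have cycle_bd x : boundary sigma x \in Cycles head by rewrite inE boundary_cycle.
have e_bd x : x.1 = e -> e \in boundary sigma x by move=> <-; rewrite mem_boundary mem_face.
have rev_neq := boundary_rev_neq rot conn deg2 disk noncycle d.
rewrite (bigD1 (boundary sigma d)) ?cycle_bd ?e_bd //=.
rewrite (bigD1 (boundary sigma (rev d))) /=; last by rewrite cycle_bd e_bd // eq_sym.
rewrite big1 => [|C /andP[/andP[/andP[_ eC] Cd] Crd]].
  rewrite !(omega_boundary rot conn deg2 disk noncycle chk) (chk d).2.
  by case: (col d); rewrite addr0 ?subrr ?addNr.
apply: omega_eq0 => x; apply/eqP => bxC.
have /boundary_edge_cases[] : d.1 \in boundary sigma x by rewrite bxC.
  by move=> bd; rewrite -bxC bd eqxx in Cd.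
by move=> bd; rewrite -bxC bd eqxx in Crd.
Qed.
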